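(* Let $X$ be a first-countable Hausdorff topological space and $f:X\to X$ a closed mapping. Suppose there exists $x_0\in X$ such that for each open cover $\mathcal{U}$ of $X$ there are $n\in\mathbb{N}_0$ and $U\in\mathcal{U}$ with $\{f^n(x_0),f^{n+1}(x_0)\}\subseteq U$. Then $f$ has a fixed point.
   Context: A mapping is closed if it maps closed sets to closed sets (continuity is not assumed). $\mathbb{N}_0=\{0,1,2,\dots\}$; $f^n$ is the $n$-fold iterate of $f$, $f^0$ the identity. *)

From mathcomp Require Import all_boot all_order.
From mathcomp Require Import all_classical topology.
Local Open Scope classical_set_scope.

Definition first_countable (X : topologicalType) : Prop :=
  forall x : X, exists B : nat -> set X,
    (forall n, nbhs x (B n)) /\
    (forall V, nbhs x V -> exists n, B n `<=` V).

Definition closed_map (X : topologicalType) (f : X -> X) : Prop :=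
  forall A : set X, closed A -> closed (f @` A).

Definition open_cover (X : topologicalType) (U : set (set X)) : Prop :=
  (forall V, U V -> open V) /\ (forall x : X, exists2 V, U V & V x).
Arguments closed_map {X}.
Arguments open_cover {X}.

From mathcomp Require Import all_boot all_order.
From mathcomp Require Import all_classical topology.
From mathcomp Require Import zify.
Local Open Scope classical_set_scope.

(* Write x_n for f^n(x0) and call y a pair cluster point if every
   neighbourhood of y contains some x_n together with x_(n+1).  If there were
   no such point, the open sets containing no consecutive pair would form an
   open cover violating the hypothesis.  Let y be one, with f y <> y.  First
   countability gives indices n_k with x_(n_k) -> y and x_(n_k + 1) -> y.  In
   a Hausdorff space the closure of S = {x_(n_k) | f x_(n_k) <> y} adds at most
   the point y, so the closed set f(cl S) misses y, which forces
   x_(n_k + 1) = y for all large k.  If the orbit repeats itself it is finite,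
   and a neighbourhood of y avoiding its other points shows f y = y; otherwise
   n_k is eventually a constant N, whence x_N = y and f y = x_(N+1) = y. *)

Section hausdorff.
Context {X : topologicalType}.
Hypothesis hX : hausdorff_space X.

Lemma nbhs_setC_finite {A : set X} {y : X} :
  finite_set A -> ~ A y -> nbhs y (~` A).
Proof.
move=> finA Ay; apply: open_nbhs_nbhs; split => //.
by rewrite openC; apply: (accessible_finite_set_closed.1 (hausdorff_accessible hX)).
Qed.

Lemma closure_image_cvg {z : nat -> X} {y : X} {P : set nat} :
  z @ \oo --> y -> closure (z @` P) `<=` z @` P `|` [set y].
Proof.
move=> zy p clp; apply: contrapT => /not_orP[notPp]; apply.
apply/esym/hX/(cvg_cluster zy) => A B [K _ zKA] Bp.
have finA : finite_set (z @` (`I_K `&` P)).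
  by apply/finite_image/finite_setIl/finite_II.
have notAp : ~ (z @` (`I_K `&` P)) p by case=> k [_ Pk] zk; apply: notPp; exists k.
have [_ [[k Pk <-] [Bzk Azk]]] := clp _ (filterI Bp (nbhs_setC_finite finA notAp)).
exists (z k); split => //; apply: zKA; rewrite /= leqNgt.
by apply/negP => kK; apply: Azk; exists k.
Qed.

Lemma closed_map_cvg_near_eq {f : X -> X} {z : nat -> X} {y : X} :
  closed_map f -> z @ \oo --> y -> f \o z @ \oo --> y -> f y <> y ->
  \forall k \near \oo, f (z k) = y.
Proof.
move=> fcl zy fzy fy; set S := z @` [set k | f (z k) <> y].
have notfS : ~ (f @` closure S) y.
  by case=> p /(closure_image_cvg zy) [[k fk <-]|->].
have ofS : open (~` (f @` closure S)).
  by rewrite openC; apply: fcl; exact: closed_closure.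
have /fzy : nbhs y (~` (f @` closure S)) by apply: open_nbhs_nbhs.
move=> [K _ fzK]; exists K => // k /fzK /= notfz.
apply: contrapT => fzk; apply: notfz; exists (z k) => //.
by apply: subset_closure; exists k.
Qed.

End hausdorff.

Lemma first_countable_cvg_pair {X : topologicalType} {I : Type}
    (u v : I -> X) {y : X} :
  first_countable X -> (forall V, nbhs y V -> exists2 i, V (u i) & V (v i)) ->
  exists a : nat -> I, u \o a @ \oo --> y /\ v \o a @ \oo --> y.
Proof.
move=> /(_ y) [B [By Bbase]] uvy.
pose D k := [set x | forall i : 'I_k.+1, B i x].
have /choice[a Da] k : exists i, D k (u i) /\ D k (v i).
  have [|i] := uvy (D k); last by exists i.
  by apply: filter_forall => i; exact: By.
have Dsub V : nbhs y V -> exists j, forall k, (j <= k)%N -> D k `<=` V.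
  by move=> /Bbase[j BjV]; exists j => k jk x /(_ (@Ordinal k.+1 j jk)); apply: BjV.
by exists a; split=> V /Dsub[j DV]; exists j => // k /= jk;
  apply: (DV _ jk); case: (Da k).
Qed.

Lemma iter_not_injective_finite (T : Type) (g : T -> T) (x : T) :
  ~ injective (fun n => iter n g x) -> finite_set (range (fun n => iter n g x)).
Proof.
move=> /existsNP[a /existsNP[b /not_implyP[gab neab]]].
wlog ab : a b gab {neab} / (a < b)%N => [wlog|].
  by case: (ltngtP a b) => [|ba|//]; [exact: wlog|exact: (wlog b a)].
apply: (sub_finite_set _ (finite_image (fun n => iter n g x) (finite_II b))).
move=> _ [n _ <-]; elim/ltn_ind: n => n IH.
have [nb|bn] := ltnP n b; first by exists n.
have -> : iter n g x = iter (n - b + a) g x.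
  by rewrite -{1}(subnK bn) iterD -gab -iterD.
by apply: IH; lia.
Qed.

Section orbit.
Variables (X : topologicalType) (f : X -> X) (x0 : X).

Definition pair_cluster (y : X) :=
  forall V, nbhs y V -> exists2 n, V (iter n f x0) & V (iter n.+1 f x0).

Lemma pair_cluster_of_open_cover :
  (forall U : set (set X), open_cover U ->
     exists (n : nat) (V : set X), U V /\ V (iter n f x0) /\ V (iter n.+1 f x0)) ->
  exists y, pair_cluster y.
Proof.
move=> hcov; apply: contrapT => /forallNP nocl.
pose U := [set V : set X |
  open V /\ forall n, ~ (V (iter n f x0) /\ V (iter n.+1 f x0))].
have [|n [V [[_ noV] orbV]]] := hcov U; last exact: noV orbV.
split=> [V [] //|y].
have /existsNP[V /not_implyP[]] := nocl y.
rewrite nbhsE => -[O [oO Oy] OV] noV.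
exists O => //; split=> // n [On On1]; apply: noV; exists n; exact: OV.
Qed.

Lemma finite_orbit_pair_cluster_fixed (y : X) : hausdorff_space X ->
  finite_set (range (fun n => iter n f x0)) -> pair_cluster y -> f y = y.
Proof.
move=> hX fin cly.
have notAy : ~ (range (fun n => iter n f x0) `\ y) y by move=> [_ /(_ erefl)].
have [n orbn orbn1] := cly _ (nbhs_setC_finite hX (finite_setD _ fin) notAy).
have orbE m :
    ~ (range (fun n => iter n f x0) `\ y) (iter m f x0) -> iter m f x0 = y.
  by move=> orbm; apply: contrapT => ne; apply: orbm; split=> //; exists m.
by rewrite -{1}(orbE _ orbn); exact: orbE _ orbn1.
Qed.

Lemma pair_cluster_fixed (y : X) :
  first_countable X -> hausdorff_space X -> closed_map f -> pair_cluster y -> f y = y.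
Proof.
move=> hfc hX fcl cly; apply: contrapT => fy.
have [a [orba orba1]] :=
  first_countable_cvg_pair (fun n => iter n f x0) (fun n => iter n.+1 f x0) hfc cly.
have [K _ orbaK] := closed_map_cvg_near_eq hX fcl orba orba1 fy.
case: (pselect (injective (fun n => iter n f x0))) => [inj|ninj].
  have aK k : (K <= k)%N -> a k = a K.
    by move=> Kk; apply/succn_inj/inj; rewrite /= (orbaK k Kk) (orbaK K (leqnn K)).
  have orbaKy : iter (a K) f x0 = y.
    apply: (cvg_unique hX) orba; apply: cvg_near_cst.
    by exists K => // k /aK /= ->.
  by apply: fy; rewrite -{1}orbaKy; exact: orbaK K (leqnn K).
apply: fy; apply: finite_orbit_pair_cluster_fixed cly => //.
exact: iter_not_injective_finite.
Qed.

End orbit.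

Theorem theorem6 (X : topologicalType) (f : X -> X) :
  first_countable X -> hausdorff_space X -> closed_map f ->
  (exists x0 : X, forall U : set (set X), open_cover U ->
     exists (n : nat) (V : set X), U V /\ V (iter n f x0) /\ V (iter n.+1 f x0)) ->
  exists x : X, f x = x.
Proof.
move=> hfc hX fcl [x0 /pair_cluster_of_open_cover[y cly]].
by exists y; exact: pair_cluster_fixed cly.
Qed.
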